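(* Let $\beta=(\beta_{ij})_{i,j\ge 0,\ i+j\le 6}$ be a real sequence such that $\mathcal M(3)(\beta)$ is positive semidefinite, $\mathcal M(2)(\beta)$ is positive definite, and $\operatorname{rank}\mathcal M(3)=\operatorname{card}\mathcal V=7$, where $\mathcal V$ is the algebraic variety of $\mathcal M(3)$. Suppose the columns $\mathcal B_2=\{1,X,Y,X^2,XY,Y^2,X^2Y\}$ form a basis of the column space of $\mathcal M(3)$. Then $\beta$ admits a representing measure if and only if $\mathcal M(3)$ is weakly consistent.
   Context: The moment matrix $\mathcal M(3)(\beta)$ has rows and columns indexed by $1,X,Y,X^2,XY,Y^2,X^3,X^2Y,XY^2,Y^3$ in this order, with entry $\beta_{i+k,j+l}$ in row $X^iY^j$ and column $X^kY^l$; $\mathcal M(2)(\beta)$ is its principal submatrix indexed by monomials of degree $\le 2$. For $p(x,y)=\sum a_{ij}x^iy^j$ of degree $\le 3$, $p(X,Y)=\sum a_{ij}X^iY^j$ is the corresponding linear combination of columns. The algebraic variety is $\mathcal V=\bigcap\{\mathcal Z(p):\deg p\le 3,\ p(X,Y)=\mathbf 0\}$ with $\mathcal Z(p)$ the real zero set of $p$. A representing measure is a positive Borel measure $\mu$ on $\mathbb R^2$ with $\beta_{ij}=\int x^iy^j\,d\mu$ for $i+j\le 6$. $\mathcal M(3)$ is weakly consistent if every polynomial $p$ of degree $\le 3$ vanishing on $\mathcal V$ satisfies $p(X,Y)=\mathbf 0$. *)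

From HB Require Import structures.
From mathcomp Require Import all_boot all_order all_algebra.
From mathcomp Require Import all_classical all_reals all_analysis.
Set Implicit Arguments. Unset Strict Implicit. Unset Printing Implicit Defensive.
Import Order.TTheory GRing.Theory Num.Theory.
Local Open Scope ring_scope.
Local Open Scope classical_set_scope.

(* Exponents (i,j) of the monomials X^i Y^j indexing M(3), in the order
   1, X, Y, X^2, XY, Y^2, X^3, X^2Y, XY^2, Y^3. *)
Definition mono_list : seq (nat * nat) :=
  [:: (0,0); (1,0); (0,1); (2,0); (1,1); (0,2); (3,0); (2,1); (1,2); (0,3)]%N.
Definition mono (k : 'I_10) : nat * nat := nth (0,0)%N mono_list k.

Definition M3 (R : nzRingType) (beta : nat -> nat -> R) : 'M[R]_10 :=
  \matrix_(r < 10, c < 10)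
    beta ((mono r).1 + (mono c).1)%N ((mono r).2 + (mono c).2)%N.

(* M(2)(beta): principal submatrix indexed by the monomials of degree <= 2
   (the first six). *)
Definition M2 (R : nzRingType) (beta : nat -> nat -> R) : 'M[R]_6 :=
  \matrix_(r < 6, c < 6)
    M3 beta (widen_ord (isT : (6 <= 10)%N) r) (widen_ord (isT : (6 <= 10)%N) c).

Definition psd_mx (R : realFieldType) (n : nat) (A : 'M[R]_n) : Prop :=
  A^T = A /\ forall v : 'cV[R]_n, 0 <= (v^T *m A *m v) ord0 ord0.

Definition pd_mx (R : realFieldType) (n : nat) (A : 'M[R]_n) : Prop :=
  A^T = A /\ forall v : 'cV[R]_n, v != 0 -> 0 < (v^T *m A *m v) ord0 ord0.

(* A polynomial of degree <= 3 is given by its coefficient vector a on the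
   10 monomials; p(x,y) = sum_k a_k x^i_k y^j_k and p(X,Y) = M(3) *m a. *)
Definition peval (R : nzRingType) (a : 'cV[R]_10) (z : R * R) : R :=
  \sum_(k < 10) a k ord0 * z.1 ^+ (mono k).1 * z.2 ^+ (mono k).2.

Definition pcols (R : nzRingType) (beta : nat -> nat -> R) (a : 'cV[R]_10)
  : 'cV[R]_10 := M3 beta *m a.

Definition variety (R : nzRingType) (beta : nat -> nat -> R) : set (R * R) :=
  [set z | forall a : 'cV[R]_10, pcols beta a = 0 -> peval a z = 0].

Definition variety_card (T : eqType) (V : set T) (n : nat) : Prop :=
  exists s : seq T, [/\ uniq s, size s = n & forall z, V z <-> z \in s].

Definition weakly_consistent (R : nzRingType) (beta : nat -> nat -> R) : Prop :=
  forall a : 'cV[R]_10,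
    (forall z, variety beta z -> peval a z = 0) -> pcols beta a = 0.

(* Indices of B2 = {1, X, Y, X^2, XY, Y^2, X^2Y} among the 10 monomials. *)
Definition B2_list : seq nat := [:: 0; 1; 2; 3; 4; 5; 7]%N.
Definition B2_idx (k : 'I_7) : 'I_10 := inord (nth 0%N B2_list k).

(* The columns B2 form a basis of the column space of M(3):
   they are linearly independent and every column of M(3) is in their span. *)
Definition B2_basis (R : fieldType) (beta : nat -> nat -> R) : Prop :=
  let B := colsub B2_idx (M3 beta) in
  row_free B^T /\ ((M3 beta)^T <= B^T)%MS.

Definition has_rep_measure (R : realType) (beta : nat -> nat -> R) : Prop :=
  exists mu : {measure set (R * R)%type -> \bar R},
    forall i j : nat, (i + j <= 6)%N ->
      mu.-integrable setT (fun z : R * R => (z.1 ^+ i * z.2 ^+ j)%:E) /\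
      (\int[mu]_z (z.1 ^+ i * z.2 ^+ j)%:E = (beta i j)%:E)%E.

(* If mu represents beta then p^T M(3) p is the integral of p^2, so every cubic p
   with p(X,Y) = 0 vanishes mu-almost everywhere: mu is carried by V, and for p vanishing on
   V each entry of p(X,Y), an integral of p times a monomial, is 0.  This direction uses none
   of the other hypotheses.

   Conversely, as B2 is a basis of the column space, ker M(3) is spanned by three cubics
   P1, P2, P3 with leading forms x^3 + A x^2y, xy^2 + B x^2y and y^3 + C x^2y.  If
   1 - AB <> 0 or B + AC <> 0, the products of these forms with x and y span all quartic
   forms, so modulo the ideal (P1, P2, P3) every polynomial of degree <= 6 is congruent to a
   cubic, simultaneously for the Riesz functional L_beta and for evaluation at the seven
   points z_k of V.  Otherwise the three leading forms vanish at (1, -B); the functional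
   f |-> (leading form of f)(1, -B) then kills ker M(3), which weak consistency identifies
   with the cubics vanishing on V, hence it is a combination sum_k l_k f(z_k).  Comparing it
   on the quadratics multiplied by x and by y puts the points charged by l on a line on which
   every P_i vanishes, so V would be infinite.  Finally, with Lagrange cubics q_k at the z_k,
   M(3) = E^T W E where E evaluates at the z_k and W_km = L_beta(q_k q_m); since q_k q_m
   reduces to a cubic vanishing on V, W is diagonal, with nonnegative diagonal as M(3) is
   positive semidefinite, and beta is the moment sequence of sum_k W_kk delta_(z_k). *)

From HB Require Import structures.
From mathcomp Require Import all_boot all_order all_algebra.
From mathcomp Require Import all_classical all_reals all_analysis.
From mathcomp Require Import measurable_realfun.
From mathcomp.algebra_tactics Require Import ring.
From mathcomp.zify Require Import zify.
Set Implicit Arguments. Unset Strict Implicit. Unset Printing Implicit Defensive.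
Import Order.TTheory GRing.Theory Num.Theory.
Local Open Scope ring_scope.

Definition m1 : 'I_10 := @Ordinal 10 0 isT.
Definition mX : 'I_10 := @Ordinal 10 1 isT.
Definition mY : 'I_10 := @Ordinal 10 2 isT.
Definition mX2 : 'I_10 := @Ordinal 10 3 isT.
Definition mXY : 'I_10 := @Ordinal 10 4 isT.
Definition mY2 : 'I_10 := @Ordinal 10 5 isT.
Definition mX3 : 'I_10 := @Ordinal 10 6 isT.
Definition mX2Y : 'I_10 := @Ordinal 10 7 isT.
Definition mXY2 : 'I_10 := @Ordinal 10 8 isT.
Definition mY3 : 'I_10 := @Ordinal 10 9 isT.

Lemma big_ord10 (V : zmodType) (F : 'I_10 -> V) : \sum_(g < 10) F g =
  F m1 + F mX + F mY + F mX2 + F mXY + F mY2 + F mX3 + F mX2Y + F mXY2 + F mY3.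
Proof.
rewrite !big_ord_recr big_ord0 /= add0r.
by repeat congr (_ + _); congr F; apply: val_inj.
Qed.

Lemma mono_deg (g : 'I_10) : ((mono g).1 + (mono g).2 <= 3)%N.
Proof. by case: g => [[|[|[|[|[|[|[|[|[|[|//]]]]]]]]]] ?]. Qed.

Lemma mono_onto (i j : nat) : (i + j <= 3)%N -> exists g : 'I_10, mono g = (i, j).
Proof.
case: i => [|[|[|[|//]]]]; case: j => [|[|[|[|//]]]] // _.
- by exists m1. - by exists mY. - by exists mY2. - by exists mY3.
- by exists mX. - by exists mXY. - by exists mXY2.
- by exists mX2. - by exists mX2Y. - by exists mX3.
Qed.

Lemma mono_split i j : (i + j <= 6)%N ->
  exists a b : 'I_10, ((mono a).1 + (mono b).1 = i)%N /\ ((mono a).2 + (mono b).2 = j)%N.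
Proof.
move=> hij; pose i1 := minn i 3; pose j1 := minn j (3 - i1).
have [a ea] : exists a, mono a = (i1, j1) by apply: mono_onto; lia.
have [b eb] : exists b, mono b = (i - i1, j - j1)%N by apply: mono_onto; lia.
by exists a, b; rewrite ea eb /=; split; lia.
Qed.

Lemma M3E (R : comNzRingType) (beta : nat -> nat -> R) (f : 'cV[R]_10) (r : 'I_10) :
  (M3 beta *m f) r 0 =
  \sum_(g < 10) f g 0 * beta ((mono g).1 + (mono r).1)%N ((mono g).2 + (mono r).2)%N.
Proof.
rewrite mxE; apply: eq_bigr => g _.
by rewrite /M3 mxE mulrC addnC [((mono r).2 + _)%N]addnC.
Qed.

Section ColumnSelection.
Variable F : fieldType.
Variables (m n : nat) (s : 'I_n -> 'I_m).

Lemma colsubEmul k (A : 'M[F]_(k, m)) : colsub s A = A *m colsub s 1%:M.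
Proof. by rewrite mulmx_colsub mulmx1. Qed.

Lemma colsub1_mul_notin (v : 'cV[F]_n) g :
  g \notin codom s -> (colsub s 1%:M *m v) g 0 = 0.
Proof.
move=> gs; rewrite mxE big1 // => k _; rewrite !mxE.
have [eg|_] := eqVneq g (s k); last by rewrite mul0r.
by rewrite eg codom_f in gs.
Qed.

Hypothesis s_inj : injective s.

Lemma colsub1_mul_at (v : 'cV[F]_n) k : (colsub s 1%:M *m v) (s k) 0 = v k 0.
Proof.
rewrite mxE (bigD1 k) //= !mxE eqxx mul1r big1 ?addr0 // => l lk.
by rewrite !mxE (inj_eq s_inj) eq_sym (negbTE lk) mul0r.
Qed.

Lemma colsub1_mul_rowsub (f : 'cV[F]_m) :
  (forall g, g \notin codom s -> f g 0 = 0) -> colsub s 1%:M *m rowsub s f = f.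
Proof.
move=> fs; apply/matrixP => g j; rewrite ord1.
have [/codomP[k ->]|gs] := boolP (g \in codom s); last by rewrite colsub1_mul_notin // fs.
by rewrite colsub1_mul_at mxE.
Qed.

Lemma colsub_free_kernel k (A : 'M[F]_(k, m)) (f : 'cV[F]_m) :
  row_free (colsub s A)^T -> A *m f = 0 ->
  (forall g, g \notin codom s -> f g 0 = 0) -> f = 0.
Proof.
move=> free Af fs; rewrite -(colsub1_mul_rowsub fs).
have : colsub s A *m rowsub s f = 0 by rewrite colsubEmul -mulmxA colsub1_mul_rowsub.
move=> /(congr1 trmx); rewrite trmx_mul trmx0 => /eqP.
by rewrite mulmx_free_eq0 // trmx_eq0 => /eqP ->; rewrite mulmx0.
Qed.

End ColumnSelection.

Lemma colsub_span_kernel (F : fieldType) k m n (s : 'I_n -> 'I_m) (A : 'M[F]_(k, m)) :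
  (A^T <= (colsub s A)^T)%MS ->
  forall c, exists v : 'cV[F]_n, A *m (delta_mx c 0 - colsub s 1%:M *m v) = 0.
Proof.
move=> /submxP[D eD] c; exists (col c D^T).
have eA : A = colsub s A *m D^T by rewrite -[LHS]trmxK eD trmx_mul trmxK.
by rewrite mulmxBr mulmxA -colsubEmul {1}eA -mulmxA -colE subrr.
Qed.

Section RowSpaces.
Variable F : fieldType.

Lemma mulmx_col_entry m n p (A : 'M[F]_(m, n)) (B : 'M[F]_(n, p)) i j :
  (A *m B) i j = (A *m col j B) i 0.
Proof. by rewrite !mxE; apply: eq_bigr => k _; rewrite !mxE. Qed.

Lemma row_span_of_ker m n (E : 'M[F]_(m, n)) (r : 'rV[F]_n) :
  (forall f : 'cV[F]_n, E *m f = 0 -> r *m f = 0) -> exists l : 'rV[F]_m, r = l *m E.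
Proof.
move=> H; apply/submxP; rewrite submxE; apply/eqP/matrixP => i j.
rewrite mulmx_col_entry H ?mxE //.
by apply/matrixP => a b; rewrite ord1 -mulmx_col_entry mulmx_coker !mxE.
Qed.

Lemma rank1_proportional m n (U : 'M[F]_(m, n)) (u v : 'rV[F]_n) :
  \rank U = 1%N -> (u <= U)%MS -> (v <= U)%MS -> u != 0 -> exists k : F, v = k *: u.
Proof.
move=> rU uU vU u0.
have Uu : (U <= u)%MS by have := mxrank_leqif_sup uU; rewrite rU rank_rV u0 => -[_ <-].
have /submxP[D ->] := submx_trans vU Uu.
by exists (D 0 0); apply/rowP => j; rewrite !mxE big_ord1.
Qed.

End RowSpaces.

Lemma widen_ord_inj n m (le : (n <= m)%N) : injective (widen_ord le).
Proof. by move=> i j e; apply: val_inj; exact: (congr1 val e). Qed.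

Lemma widen_ord_codom n m (le : (n <= m)%N) (g : 'I_m) :
  (g \in codom (widen_ord le)) = (g < n)%N.
Proof.
apply/codomP/idP => [[i ->]|gn]; first exact: (ltn_ord i).
by exists (Ordinal gn); apply: val_inj.
Qed.

Lemma pd_block_ker (R : realFieldType) m n (le : (n <= m)%N) (A : 'M[R]_m) (f : 'cV[R]_m) :
  pd_mx (mxsub (widen_ord le) (widen_ord le) A) ->
  (forall g : 'I_m, (n <= g)%N -> f g 0 = 0) -> A *m f = 0 -> f = 0.
Proof.
move=> [_ pd] fn Af; set w := widen_ord le.
have ef : colsub w 1%:M *m rowsub w f = f.
  apply: colsub1_mul_rowsub => [|g]; first exact: widen_ord_inj.
  by rewrite widen_ord_codom -leqNgt; exact: fn.
have Bc : mxsub w w A *m rowsub w f = 0.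
  rewrite -[A]mulmx1 mxsub_mul mul_rowsub_mx mul_rowsub_mx -mulmxA ef Af.
  by apply/matrixP => i j; rewrite !mxE.
have [c0|/pd] := eqVneq (rowsub w f) 0; first by rewrite -ef c0 mulmx0.
by rewrite -mulmxA Bc mulmx0 mxE ltxx.
Qed.

Lemma sym_factor (F : fieldType) n m (M : 'M[F]_m) (E : 'M[F]_(n, m)) (L : 'M[F]_(m, n)) :
  M^T = M -> M *m (1%:M - L *m E) = 0 -> M = E^T *m (L^T *m M *m L) *m E.
Proof.
move=> Msym; rewrite mulmxBr mulmx1 => /eqP; rewrite subr_eq0 => /eqP ML.
have MT : M = E^T *m L^T *m M by rewrite -{1}Msym {1}ML !trmx_mul Msym.
by rewrite !mulmxA -MT -mulmxA -ML.
Qed.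

(* A polynomial of degree <= 6 is a coefficient function h : nat -> nat -> R, of which only
   the h a b with a + b <= 6 matter, and a cubic is a column f : 'cV_10 indexed by mono.
   riesz m h pairs h with the moment sequence m: riesz beta is L_beta and riesz (mom_pt z)
   is evaluation at z. *)
Section Sextics.
Variable R : comNzRingType.
Implicit Types (m h : nat -> nat -> R) (f g p : 'cV[R]_10) (z : R * R).

Definition riesz m h : R :=
  \sum_(a < 7) \sum_(b < 7) (if (a + b <= 6)%N then h a b * m a b else 0).

Definition mom_pt z (a b : nat) : R := z.1 ^+ a * z.2 ^+ b.

Definition monom (i j a b : nat) : R := if (a == i) && (b == j) then 1 else 0.

Definition mulXY f (c1 c2 a b : nat) : R :=
  \sum_(g < 10) (if ((mono g).1 + c1 == a)%N && ((mono g).2 + c2 == b)%N then f g 0 else 0).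

Definition cubic_mul f g (a b : nat) : R :=
  \sum_(k < 10) g k 0 * mulXY f (mono k).1 (mono k).2 a b.

Definition cubic f : nat -> nat -> R := mulXY f 0 0.

Lemma riesz_ext m h h' : (forall a b, (a + b <= 6)%N -> h a b = h' a b) ->
  riesz m h = riesz m h'.
Proof. by move=> e; apply: eq_bigr => a _; apply: eq_bigr => b _; case: ifP => // /e ->. Qed.

Lemma riesz_lin m k h1 h2 :
  riesz m (fun a b => k * h1 a b + h2 a b) = k * riesz m h1 + riesz m h2.
Proof.
rewrite /riesz mulr_sumr -big_split; apply: eq_bigr => a _.
by rewrite mulr_sumr -big_split; apply: eq_bigr => b _; case: ifP => _ /=; ring.
Qed.

Lemma riesz0 m : riesz m (fun _ _ => 0) = 0.
Proof. by apply: big1 => a _; apply: big1 => b _; rewrite mul0r if_same. Qed.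

Lemma riesz_sum m n (F : 'I_n -> nat -> nat -> R) :
  riesz m (fun a b => \sum_(i < n) F i a b) = \sum_(i < n) riesz m (F i).
Proof.
elim: n F => [|n IH] F.
  by rewrite big_ord0 -[RHS](riesz0 m); apply: riesz_ext => a b _; rewrite big_ord0.
rewrite big_ord_recr /= -IH -[X in _ = X + _]mul1r -riesz_lin.
by apply: riesz_ext => a b _; rewrite big_ord_recr /= mul1r.
Qed.

Lemma riesz_monom m i j : (i + j <= 6)%N -> riesz m (monom i j) = m i j.
Proof.
move=> hij; have hi : (i < 7)%N by lia. have hj : (j < 7)%N by lia.
rewrite /riesz (bigD1 (Ordinal hi)) //= (bigD1 (Ordinal hj)) //= /monom !eqxx hij mul1r.
rewrite [X in _ + X + _]big1 ?addr0 => [|b]; last first.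
  by rewrite -val_eqE /= => /negbTE ->; rewrite mul0r if_same.
rewrite big1 ?addr0 // => a; rewrite -val_eqE /= => /negbTE ai.
by apply: big1 => b _; rewrite ai mul0r if_same.
Qed.

Lemma rieszZ m k h : riesz m (fun a b => k * h a b) = k * riesz m h.
Proof.
rewrite -[RHS]addr0 -(riesz0 m) -riesz_lin.
by apply: riesz_ext => a b _; rewrite addr0.
Qed.

Lemma mulXY_monom f c1 c2 a b :
  mulXY f c1 c2 a b = \sum_(g < 10) f g 0 * monom ((mono g).1 + c1)%N ((mono g).2 + c2)%N a b.
Proof.
apply: eq_bigr => g _; rewrite /monom ![(_ == (_ + _)%N)]eq_sym.
by case: ifP; rewrite ?mulr1 ?mulr0.
Qed.

Lemma riesz_mulXY m f c1 c2 : (c1 + c2 <= 3)%N ->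
  riesz m (mulXY f c1 c2) = \sum_(g < 10) f g 0 * m ((mono g).1 + c1)%N ((mono g).2 + c2)%N.
Proof.
move=> hc; rewrite (riesz_ext _ (fun a b _ => mulXY_monom f c1 c2 a b)) riesz_sum.
apply: eq_bigr => g _; rewrite rieszZ riesz_monom //.
by have := mono_deg g; lia.
Qed.

Lemma riesz_pt_mulXY z f c1 c2 : (c1 + c2 <= 3)%N ->
  riesz (mom_pt z) (mulXY f c1 c2) = peval f z * mom_pt z c1 c2.
Proof.
move=> hc; rewrite riesz_mulXY // /peval mulr_suml.
by apply: eq_bigr => g _; rewrite /mom_pt !exprD; ring.
Qed.

Lemma riesz_cubic_mul m f g : riesz m (cubic_mul f g) =
  \sum_(k < 10) g k 0 *
    \sum_(l < 10) f l 0 * m ((mono l).1 + (mono k).1)%N ((mono l).2 + (mono k).2)%N.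
Proof.
rewrite riesz_sum; apply: eq_bigr => k _.
by rewrite rieszZ riesz_mulXY ?mono_deg.
Qed.

Lemma riesz_beta_cubic beta f : riesz beta (cubic f) = (M3 beta *m f) m1 0.
Proof. by rewrite riesz_mulXY // M3E. Qed.

Lemma riesz_pt_cubic z f : riesz (mom_pt z) (cubic f) = peval f z.
Proof. by rewrite riesz_pt_mulXY // /mom_pt !expr0 !mulr1. Qed.

Lemma riesz_beta_cubic_mul beta f g :
  riesz beta (cubic_mul f g) = \sum_(k < 10) g k 0 * (M3 beta *m f) k 0.
Proof. by rewrite riesz_cubic_mul; apply: eq_bigr => k _; rewrite M3E. Qed.

Lemma riesz_pt_cubic_mul z f g :
  riesz (mom_pt z) (cubic_mul f g) = peval f z * peval g z.
Proof.
rewrite /cubic_mul riesz_sum {2}/peval mulr_sumr; apply: eq_bigr => k _.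
by rewrite rieszZ riesz_pt_mulXY ?mono_deg // /mom_pt; ring.
Qed.

Lemma mulXY_lin k f1 f2 c1 c2 a b :
  mulXY (k *: f1 + f2) c1 c2 a b = k * mulXY f1 c1 c2 a b + mulXY f2 c1 c2 a b.
Proof.
rewrite /mulXY mulr_sumr -big_split; apply: eq_bigr => g _.
by case: ifP => _; rewrite /= ?mxE ?mulr0 ?addr0.
Qed.

Lemma mulXY0 c1 c2 a b : mulXY (0 : 'cV[R]_10) c1 c2 a b = 0.
Proof. by apply: big1 => g _; rewrite mxE if_same. Qed.

Lemma riesz_cubic0 m : riesz m (cubic (0 : 'cV[R]_10)) = 0.
Proof. by rewrite -[RHS](riesz0 m); apply: riesz_ext => a b _; rewrite /cubic mulXY0. Qed.

Lemma cubic_delta (g : 'I_10) a b :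
  cubic (delta_mx g 0 : 'cV[R]_10) a b = monom (mono g).1 (mono g).2 a b.
Proof.
rewrite /cubic /mulXY (bigD1 g) //= big1 => [|l /negbTE lg]; last first.
  by rewrite mxE lg if_same.
by rewrite mxE !eqxx !addn0 /monom [(a == _)]eq_sym [(b == _)]eq_sym addr0.
Qed.

Lemma monomC i j a b : monom i j a b = monom a b i j :> R.
Proof. by rewrite /monom [(a == _)]eq_sym [(b == _)]eq_sym. Qed.

Definition shift (e1 e2 : nat) h (a b : nat) : R :=
  if (e1 <= a)%N && (e2 <= b)%N then h (a - e1)%N (b - e2)%N else 0.

Lemma shift_mulXY f c1 c2 e1 e2 :
  shift e1 e2 (mulXY f c1 c2) = mulXY f (c1 + e1)%N (c2 + e2)%N.
Proof.
apply/funext => a; apply/funext => b; rewrite /shift /mulXY.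
case: ifP => [/andP[ea eb]|/negbT e].
  apply: eq_bigr => g _; congr (if _ then _ else _).
  by apply/andP/andP => -[/eqP ? /eqP ?]; split; apply/eqP; lia.
symmetry; apply: big1 => g _; case: ifP => // /andP[/eqP ? /eqP ?].
by move: e; rewrite negb_and => /orP[] /negP[]; lia.
Qed.

Lemma shift_monom i j e1 e2 : shift e1 e2 (monom i j) = monom (i + e1)%N (j + e2)%N.
Proof.
apply/funext => a; apply/funext => b; rewrite /shift /monom.
case: ifP => [/andP[ea eb]|/negbT e].
  by congr (if _ then _ else _); apply/andP/andP => -[/eqP ? /eqP ?]; split; apply/eqP; lia.
case: ifP => // /andP[/eqP ? /eqP ?].
by move: e; rewrite negb_and => /orP[] /negP[]; lia.
Qed.

Lemma shift_lin e1 e2 k h1 h2 :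
  shift e1 e2 (fun a b => k * h1 a b + h2 a b) =
  (fun a b => k * shift e1 e2 h1 a b + shift e1 e2 h2 a b).
Proof.
by apply/funext => a; apply/funext => b; rewrite /shift; case: ifP; rewrite ?mulr0 ?addr0.
Qed.

Lemma shiftB e1 e2 h1 h2 :
  shift e1 e2 (fun a b => h1 a b - h2 a b) =
  (fun a b => shift e1 e2 h1 a b - shift e1 e2 h2 a b).
Proof. by apply/funext => a; apply/funext => b; rewrite /shift; case: ifP; rewrite ?subr0. Qed.

Definition low d h : Prop := forall a b, (d < a + b)%N -> (a + b <= 6)%N -> h a b = 0.

Lemma low_shift d h e1 e2 : low d h -> low (d + e1 + e2)%N (shift e1 e2 h).
Proof.
move=> hd a b ab ab6; rewrite /shift; case: ifP => // /andP[ea eb].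
by apply: hd; lia.
Qed.

Lemma low_mulXY f c1 c2 : low (c1 + c2 + 3)%N (mulXY f c1 c2).
Proof.
move=> a b ab _; apply: big1 => g _; case: ifP => // /andP[/eqP ea /eqP eb].
by have := mono_deg g; lia.
Qed.

End Sextics.

Arguments monom {R} i j a b.

Section Ideal.
Variable R : comNzRingType.
Implicit Types (h : nat -> nat -> R) (p : 'cV[R]_10).
Variable gens : 'cV[R]_10 -> Prop.

Inductive in_ideal (d : nat) : (nat -> nat -> R) -> Prop :=
| in_ideal0 : in_ideal d (fun _ _ => 0)
| in_ideal_gen p c1 c2 : gens p -> (c1 + c2 <= d)%N -> in_ideal d (mulXY p c1 c2)
| in_ideal_lin k h1 h2 : in_ideal d h1 -> in_ideal d h2 ->
    in_ideal d (fun a b => k * h1 a b + h2 a b).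

Lemma in_idealZ d k h : in_ideal d h -> in_ideal d (fun a b => k * h a b).
Proof.
move=> hd; have -> : (fun a b => k * h a b) = (fun a b => k * h a b + 0).
  by apply/funext => a; apply/funext => b; rewrite addr0.
exact: in_ideal_lin hd (in_ideal0 d).
Qed.

Lemma in_idealD d h1 h2 : in_ideal d h1 -> in_ideal d h2 ->
  in_ideal d (fun a b => h1 a b + h2 a b).
Proof.
move=> h1d h2d; have -> : (fun a b => h1 a b + h2 a b) = (fun a b => 1 * h1 a b + h2 a b).
  by apply/funext => a; apply/funext => b; rewrite mul1r.
exact: in_ideal_lin.
Qed.

Lemma in_ideal_shift d h e1 e2 : in_ideal d h -> in_ideal (d + e1 + e2)%N (shift e1 e2 h).
Proof.
elim=> [|p c1 c2 gp hc|k h1 h2 _ IH1 _ IH2].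
- have -> : shift e1 e2 (fun _ _ => 0) = (fun _ _ => 0 : R).
    by apply/funext => a; apply/funext => b; rewrite /shift if_same.
  exact: in_ideal0.
- by rewrite shift_mulXY; apply: in_ideal_gen => //; lia.
- by rewrite shift_lin; exact: in_ideal_lin.
Qed.

Lemma in_ideal_low d h : in_ideal d h -> low (d + 3)%N h.
Proof.
elim=> [|p c1 c2 _ hc|k h1 h2 _ IH1 _ IH2] a b ab ab6 //.
- by apply: low_mulXY => //; lia.
- by rewrite IH1 // IH2 // mulr0 addr0.
Qed.

Lemma low3_of_deg4 q h : (q <= 4)%N -> in_ideal 1 h ->
  (forall a, (a <= 4)%N -> h a (4 - a)%N = monom q (4 - q) a (4 - a)) ->
  low 3 (fun a b => monom q (4 - q) a b - h a b).
Proof.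
move=> q4 hI h4 a b ab ab6.
have [e4|ne4] := eqVneq (a + b)%N 4.
  have -> : b = (4 - a)%N by lia.
  by rewrite h4 ?subrr //; lia.
have ab5 : (4 < a + b)%N by rewrite ltn_neqAle eq_sym ne4.
rewrite (in_ideal_low hI ab5 ab6) subr0.
by rewrite /monom; case: ifP => // /andP[/eqP ea /eqP eb]; lia.
Qed.

Lemma monom_leading i j :
  (forall q, (q <= 4)%N ->
     exists2 h, in_ideal 1 h & low 3 (fun a b => monom q (4 - q) a b - h a b)) ->
  (4 <= i + j)%N ->
  exists2 h, in_ideal (i + j - 3) h & low (i + j - 1) (fun a b => monom i j a b - h a b).
Proof.
move=> quartic hij; set q := minn i 4.
have [h hI hL] := quartic q (geq_minr _ _).
exists (shift (i - q) (j - (4 - q)) h).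
  have -> : (i + j - 3 = 1 + (i - q) + (j - (4 - q)))%N by rewrite /q; lia.
  exact: in_ideal_shift.
have -> : (i + j - 1 = 3 + (i - q) + (j - (4 - q)))%N by rewrite /q; lia.
have ei : (q + (i - q) = i)%N by rewrite /q; lia.
have ej : (4 - q + (j - (4 - q)) = j)%N by rewrite /q; lia.
suff -> : (fun a b => monom i j a b - shift (i - q) (j - (4 - q)) h a b) =
          shift (i - q) (j - (4 - q)) (fun a b => monom q (4 - q) a b - h a b).
  exact: low_shift.
by rewrite shiftB shift_monom ei ej.
Qed.

End Ideal.

(** * Reduction to cubics *)

Section Reducibility.
Variable R : comNzRingType.
Variable fam : (nat -> nat -> R) -> Prop.
Implicit Types (h : nat -> nat -> R) (f p : 'cV[R]_10).

Definition reducible h : Prop :=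
  exists f, forall m, fam m -> riesz m h = riesz m (cubic f).

Definition null_cubic p : Prop :=
  forall m, fam m -> forall c1 c2, (c1 + c2 <= 3)%N -> riesz m (mulXY p c1 c2) = 0.

Lemma reducible_ext h h' : (forall a b, (a + b <= 6)%N -> h a b = h' a b) ->
  reducible h -> reducible h'.
Proof. by move=> e [f hf]; exists f => m fm; rewrite -(riesz_ext _ e) hf. Qed.

Lemma reducible_lin k h1 h2 : reducible h1 -> reducible h2 ->
  reducible (fun a b => k * h1 a b + h2 a b).
Proof.
move=> [f1 hf1] [f2 hf2]; exists (k *: f1 + f2) => m fm.
rewrite riesz_lin hf1 // hf2 // -riesz_lin.
by apply: riesz_ext => a b _; rewrite /cubic mulXY_lin.
Qed.

Lemma reducible0 : reducible (fun _ _ => 0).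
Proof. by exists 0 => m _; rewrite riesz0 riesz_cubic0. Qed.

Lemma reducibleZ k h : reducible h -> reducible (fun a b => k * h a b).
Proof.
move=> hr; apply: reducible_ext (reducible_lin k hr reducible0) => a b _.
by rewrite addr0.
Qed.

Lemma reducible_sum n (F : 'I_n -> nat -> nat -> R) :
  (forall i, reducible (F i)) -> reducible (fun a b => \sum_(i < n) F i a b).
Proof.
elim: n F => [|n IH] F hF.
  by apply: reducible_ext reducible0 => a b _; rewrite big_ord0.
apply: (reducible_ext
  (h := fun a b => 1 * \sum_(i < n) F (widen_ord (leqnSn n) i) a b + F ord_max a b)).
  by move=> a b _; rewrite big_ord_recr /= mul1r.
by apply: reducible_lin; [apply: IH|].
Qed.

Lemma reducible_monom_low i j : (i + j <= 3)%N -> reducible (monom i j).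
Proof.
move=> hij; have [g eg] := mono_onto hij.
by exists (delta_mx g 0) => m _; apply: riesz_ext => a b _; rewrite cubic_delta eg.
Qed.

Lemma reducible_null p c1 c2 : null_cubic p -> (c1 + c2 <= 3)%N -> reducible (mulXY p c1 c2).
Proof. by move=> hp hc; exists 0 => m fm; rewrite hp // riesz_cubic0. Qed.

Lemma reducible_low d h : low d h ->
  (forall i j, (i + j <= d)%N -> reducible (monom i j)) -> reducible h.
Proof.
move=> hl hm; pose m i j := if (i + j <= d)%N then h i j else 0.
apply: (reducible_ext (h := fun a b => \sum_(i < 7) \sum_(j < 7)
   (if (i + j <= 6)%N then m i j * monom i j a b else 0))).
  move=> a b ab; transitivity (riesz m (monom a b)).
    by apply: eq_bigr => i _; apply: eq_bigr => j _; rewrite monomC mulrC.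
  by rewrite riesz_monom // /m; case: leqP => // /hl ->.
apply: reducible_sum => i; apply: reducible_sum => j; rewrite /m.
case: (leqP (i + j) d) => [hij|_]; last first.
  by case: (i + j <= 6)%N; apply: reducible_ext reducible0 => a b _; rewrite ?mul0r.
by case: (i + j <= 6)%N; [apply: reducibleZ; apply: hm | exact: reducible0].
Qed.

Variable gens : 'cV[R]_10 -> Prop.
Hypothesis gens_null : forall p, gens p -> null_cubic p.

Lemma reducible_ideal d h : (d <= 3)%N -> in_ideal gens d h -> reducible h.
Proof.
move=> d3; elim=> [|p c1 c2 gp hc|k h1 h2 _ IH1 _ IH2].
- exact: reducible0.
- by apply: reducible_null; [exact: gens_null | exact: leq_trans d3].
- exact: reducible_lin.
Qed.

Hypothesis quartic : forall q, (q <= 4)%N ->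
  exists2 h, in_ideal gens 1 h & low 3 (fun a b => monom q (4 - q) a b - h a b).

Lemma reducible_monom i j : (i + j <= 6)%N -> reducible (monom i j).
Proof.
move: i j; suff : forall d, (d <= 6)%N -> forall i j, (i + j <= d)%N -> reducible (monom i j).
  by move=> hd i j hij; exact: hd hij.
elim=> [|d IH] d6 i j hij; first by apply: reducible_monom_low; lia.
have [hle|hgt] := leqP (i + j) d; first by apply: IH => //; lia.
have [h3|h4] := leqP (i + j) 3; first exact: reducible_monom_low.
have [h hI hL] := monom_leading quartic h4.
apply: (reducible_ext (h := fun a b => 1 * (monom i j a b - h a b) + h a b)).
  by move=> a b _; rewrite mul1r subrK.
apply: reducible_lin; last by apply: reducible_ideal hI; lia.
apply: reducible_low hL _ => i' j' hij'.
by apply: IH; lia.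
Qed.

Theorem reducible_all h : reducible h.
Proof.
apply: (reducible_low (d := 6)) => [a b ab ab6|]; first by lia.
exact: reducible_monom.
Qed.

End Reducibility.

Definition lead_form (R : nzRingType) (p : 'cV[R]_10) (c3 c2 c1 c0 : R) : Prop :=
  [/\ p mX3 0 = c3, p mX2Y 0 = c2, p mXY2 0 = c1 & p mY3 0 = c0].

Lemma mulXY_deg4 (R : comNzRingType) (p : 'cV[R]_10) c3 c2 c1 c0 a :
  lead_form p c3 c2 c1 c0 -> (a <= 4)%N ->
  mulXY p 1 0 a (4 - a) = [:: 0; c0; c1; c2; c3]`_a /\
  mulXY p 0 1 a (4 - a) = [:: c0; c1; c2; c3; 0]`_a.
Proof.
case=> p3 p2 p1 p0; case: a => [|[|[|[|[|//]]]]] _;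
  by rewrite /mulXY !big_ord10 /= ?p3 ?p2 ?p1 ?p0 !(add0r, addr0).
Qed.

Section QuarticForms.
Variable R : fieldType.
Variables (P1 P2 P3 : 'cV[R]_10) (A B C : R).
Hypothesis lead1 : lead_form P1 1 A 0 0.
Hypothesis lead2 : lead_form P2 0 B 1 0.
Hypothesis lead3 : lead_form P3 0 C 0 1.

Definition gens3 (p : 'cV[R]_10) : Prop := [\/ p = P1, p = P2 | p = P3].

Definition quartic_rep q (h : nat -> nat -> R) : Prop := in_ideal gens3 1 h /\
  forall a, (a <= 4)%N -> h a (4 - a)%N = monom q (4 - q) a (4 - a).

Lemma gen_in_ideal p c1 c2 : gens3 p -> (c1 + c2 = 1)%N -> in_ideal gens3 1 (mulXY p c1 c2).
Proof. by move=> gp hc; apply: in_ideal_gen => //; rewrite hc. Qed.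

Ltac in_ideal_comb :=
  repeat (apply: in_idealD || apply: in_idealZ || (apply: gen_in_ideal; [by constructor|by []])).

Lemma mixed_quartic_reps : (1 - A * B != 0) \/ (B + A * C != 0) ->
  (exists h, quartic_rep 3 h) /\ (exists h, quartic_rep 2 h).
Proof.
(* The leading forms of y P1 - A x P2 and x P2 - B y P1 are (1 - AB) x^3y and
   (1 - AB) x^2y^2; those of B y P1 - A y P2 + A x P3 and C y P1 + y P2 - x P3 are
   (B + AC) x^3y and (B + AC) x^2y^2. *)
case=> nd.
- split.
  + exists (fun a b => (1 - A * B)^-1 * mulXY P1 0 1 a b + (- A / (1 - A * B)) * mulXY P2 1 0 a b).
    split; first by in_ideal_comb.
    move=> a a4; rewrite (mulXY_deg4 lead1 a4).2 (mulXY_deg4 lead2 a4).1 /monom.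
    by move: a4; case: a => [|[|[|[|[|//]]]]] _ /=; field.
  + exists (fun a b => (1 - A * B)^-1 * mulXY P2 1 0 a b + (- B / (1 - A * B)) * mulXY P1 0 1 a b).
    split; first by in_ideal_comb.
    move=> a a4; rewrite (mulXY_deg4 lead2 a4).1 (mulXY_deg4 lead1 a4).2 /monom.
    by move: a4; case: a => [|[|[|[|[|//]]]]] _ /=; field.
- split.
  + exists (fun a b => B / (B + A * C) * mulXY P1 0 1 a b +
      ((- A / (B + A * C)) * mulXY P2 0 1 a b + A / (B + A * C) * mulXY P3 1 0 a b)).
    split; first by in_ideal_comb.
    move=> a a4; rewrite (mulXY_deg4 lead1 a4).2 (mulXY_deg4 lead2 a4).2.
    rewrite (mulXY_deg4 lead3 a4).1 /monom.
    by move: a4; case: a => [|[|[|[|[|//]]]]] _ /=; field.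
  + exists (fun a b => C / (B + A * C) * mulXY P1 0 1 a b +
      ((B + A * C)^-1 * mulXY P2 0 1 a b + (- 1 / (B + A * C)) * mulXY P3 1 0 a b)).
    split; first by in_ideal_comb.
    move=> a a4; rewrite (mulXY_deg4 lead1 a4).2 (mulXY_deg4 lead2 a4).2.
    rewrite (mulXY_deg4 lead3 a4).1 /monom.
    by move: a4; case: a => [|[|[|[|[|//]]]]] _ /=; field.
Qed.

Lemma quartic_reps : (1 - A * B != 0) \/ (B + A * C != 0) ->
  forall q, (q <= 4)%N ->
  exists2 h, in_ideal gens3 1 h & low 3 (fun a b => monom q (4 - q) a b - h a b).
Proof.
move=> nd q q4; have [[h31 [i31 r31]] [h22 [i22 r22]]] := mixed_quartic_reps nd.
suff [h [hI h4]] : exists h, quartic_rep q h by exists h => //; exact: low3_of_deg4 q4 hI h4.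
move: q4; case: q => [|[|[|[|[|//]]]]] _.
- exists (fun a b => mulXY P3 0 1 a b + (- C) * h22 a b); split; first by in_ideal_comb; exact: i22.
  move=> a a4; rewrite (mulXY_deg4 lead3 a4).2 r22 // /monom.
  by move: a4; case: a => [|[|[|[|[|//]]]]] _ /=; ring.
- exists (fun a b => mulXY P2 0 1 a b + (- B) * h22 a b); split; first by in_ideal_comb; exact: i22.
  move=> a a4; rewrite (mulXY_deg4 lead2 a4).2 r22 // /monom.
  by move: a4; case: a => [|[|[|[|[|//]]]]] _ /=; ring.
- by exists h22.
- by exists h31.
- exists (fun a b => mulXY P1 1 0 a b + (- A) * h31 a b); split; first by in_ideal_comb; exact: i31.
  move=> a a4; rewrite (mulXY_deg4 lead1 a4).1 r31 // /monom.
  by move: a4; case: a => [|[|[|[|[|//]]]]] _ /=; ring.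
Qed.

End QuarticForms.

(** * The kernel of M(3) *)

Lemma B2_idx_val k : (B2_idx k : nat) = nth 0%N B2_list k.
Proof. by rewrite /B2_idx inordK //; case: k => [[|[|[|[|[|[|[|//]]]]]]] ?]. Qed.

Lemma B2_idx_inj : injective B2_idx.
Proof.
move=> k l /(congr1 (@nat_of_ord 10)); rewrite !B2_idx_val => e; apply: val_inj; move: e.
by case: k l => [[|[|[|[|[|[|[|//]]]]]]] ?] [[|[|[|[|[|[|[|//]]]]]]] ?].
Qed.

Lemma B2_codom g : (g \in codom B2_idx) = ((g : nat) \in B2_list).
Proof.
apply/codomP/idP => [[k ->]|gB]; first by rewrite B2_idx_val mem_nth.
have k7 : (index (g : nat) B2_list < 7)%N by rewrite -[7%N]/(size B2_list) index_mem.
by exists (Ordinal k7); apply: val_inj; rewrite /= B2_idx_val nth_index.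
Qed.

Lemma B2_notin g : (g \notin codom B2_idx) = [|| g == mX3, g == mXY2 | g == mY3].
Proof. by rewrite B2_codom; case: g => [[|[|[|[|[|[|[|[|[|[|//]]]]]]]]]] ?]. Qed.

Definition iX2Y : 'I_7 := @Ordinal 7 6 isT.

Lemma B2_idx_X2Y : B2_idx iX2Y = mX2Y.
Proof. by apply: val_inj; rewrite /= B2_idx_val. Qed.

Lemma M3_kernel (F : fieldType) (beta : nat -> nat -> F) : B2_basis beta ->
  exists (P1 P2 P3 : 'cV[F]_10) (A B C : F),
  [/\ lead_form P1 1 A 0 0, lead_form P2 0 B 1 0, lead_form P3 0 C 0 1,
      [/\ M3 beta *m P1 = 0, M3 beta *m P2 = 0 & M3 beta *m P3 = 0] &
      forall f, M3 beta *m f = 0 -> f = f mX3 0 *: P1 + f mXY2 0 *: P2 + f mY3 0 *: P3].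
Proof.
move=> [free span].
pose P c (v : 'cV[F]_7) := delta_mx c 0 - colsub B2_idx 1%:M *m v.
have Pout c v g : g \notin codom B2_idx -> P c v g 0 = (g == c)%:R.
  move=> gB; rewrite mxE [X in X + _]mxE [X in _ + X]mxE colsub1_mul_notin //.
  by rewrite subr0 eqxx andbT.
have PX2Y c v : c != mX2Y -> P c v mX2Y 0 = - v iX2Y 0.
  move=> cX; rewrite mxE [X in X + _]mxE [X in _ + X]mxE -B2_idx_X2Y.
  rewrite colsub1_mul_at; last exact: B2_idx_inj.
  by rewrite B2_idx_X2Y eq_sym (negbTE cX) sub0r.
have [v1 K1] := colsub_span_kernel span mX3.
have [v2 K2] := colsub_span_kernel span mXY2.
have [v3 K3] := colsub_span_kernel span mY3.
exists (P mX3 v1), (P mXY2 v2), (P mY3 v3), (- v1 iX2Y 0), (- v2 iX2Y 0), (- v3 iX2Y 0).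
split => //; try by split; rewrite ?PX2Y ?Pout ?B2_notin.
move=> f Mf; apply/eqP; rewrite -subr_eq0; apply/eqP.
apply: (colsub_free_kernel B2_idx_inj free).
  by rewrite mulmxBr !mulmxDr -!scalemxAr K1 K2 K3 Mf !scaler0 !addr0 subr0.
move=> g gB; move: (Pout mX3 v1 g gB) (Pout mXY2 v2 g gB) (Pout mY3 v3 g gB).
move: (P mX3 v1) (P mXY2 v2) (P mY3 v3) => Q1 Q2 Q3 e1 e2 e3.
by rewrite !mxE e1 e2 e3; move: gB; rewrite B2_notin => /or3P[] /eqP -> /=; ring.
Qed.

Definition eval_mx (R : comNzRingType) n (z : 'I_n -> R * R) : 'M[R]_(n, 10) :=
  \matrix_(k, g) mom_pt (z k) (mono g).1 (mono g).2.

Lemma eval_mxE (R : comNzRingType) n (z : 'I_n -> R * R) f k :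
  (eval_mx z *m f) k 0 = peval f (z k).
Proof. by rewrite mxE /peval; apply: eq_bigr => g _; rewrite mxE /mom_pt; ring. Qed.

Lemma peval_lin (R : comNzRingType) (k : R) (f1 f2 : 'cV[R]_10) z :
  peval (k *: f1 + f2) z = k * peval f1 z + peval f2 z.
Proof. by rewrite /peval mulr_sumr -big_split; apply: eq_bigr => g _; rewrite !mxE /=; ring. Qed.

Lemma peval_delta (R : comNzRingType) (g : 'I_10) z :
  peval (delta_mx g 0 : 'cV[R]_10) z = mom_pt z (mono g).1 (mono g).2.
Proof.
rewrite /peval (bigD1 g) //= mxE !eqxx mul1r big1 ?addr0 // => h hg.
by rewrite mxE (negbTE hg) !mul0r.
Qed.

Section LeadingForm.
Variable R : comNzRingType.
Variable t : R.

Definition lead_row : 'rV[R]_10 :=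
  \row_g (if ((mono g).1 + (mono g).2 == 3)%N then t ^+ (mono g).2 else 0).

Definition lead_at (f : 'cV[R]_10) : R := (lead_row *m f) 0 0.

Lemma lead_atE f :
  lead_at f = f mX3 0 + t * f mX2Y 0 + t ^+ 2 * f mXY2 0 + t ^+ 3 * f mY3 0.
Proof. by rewrite /lead_at mxE big_ord10 !mxE /=; ring. Qed.

Lemma lead_at_lin k f1 f2 : lead_at (k *: f1 + f2) = k * lead_at f1 + lead_at f2.
Proof. by rewrite /lead_at mulmxDr -scalemxAr !mxE. Qed.

Lemma lead_at_delta g : lead_at (delta_mx g 0) =
  if ((mono g).1 + (mono g).2 == 3)%N then t ^+ (mono g).2 else 0.
Proof. by rewrite /lead_at -colE !mxE. Qed.

End LeadingForm.

Definition xcubic (R : nzRingType) (c0 c1 c2 c3 : R) : 'cV[R]_10 :=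
  c0 *: delta_mx m1 0 + c1 *: delta_mx mX 0 + c2 *: delta_mx mX2 0 + c3 *: delta_mx mX3 0.

Lemma peval_xcubic (R : comNzRingType) (c0 c1 c2 c3 : R) z :
  peval (xcubic c0 c1 c2 c3) z = c0 + c1 * z.1 + c2 * z.1 ^+ 2 + c3 * z.1 ^+ 3.
Proof. by rewrite /peval big_ord10 !mxE /=; ring. Qed.

Lemma lead_at_xcubic (R : comNzRingType) t (c0 c1 c2 c3 : R) :
  lead_at t (xcubic c0 c1 c2 c3) = c3.
Proof. by rewrite lead_atE !mxE /=; ring. Qed.

Lemma peval_line (R : comNzRingType) (f : 'cV[R]_10) (k t : R) :
  exists G0 G1 G2 : R, forall u,
    peval f (u, k + t * u) = G0 + G1 * u + G2 * u ^+ 2 + lead_at t f * u ^+ 3.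
Proof.
exists (f m1 0 + f mY 0 * k + f mY2 0 * k ^+ 2 + f mY3 0 * k ^+ 3).
exists (f mX 0 + f mY 0 * t + f mXY 0 * k + 2 * f mY2 0 * k * t + f mXY2 0 * k ^+ 2 +
        3 * f mY3 0 * k ^+ 2 * t).
exists (f mX2 0 + f mXY 0 * t + f mY2 0 * t ^+ 2 + f mX2Y 0 * k + 2 * f mXY2 0 * k * t +
        3 * f mY3 0 * k * t ^+ 2).
by move=> u; rewrite lead_atE /peval big_ord10 /=; ring.
Qed.

Lemma peval_mulmx (R : comNzRingType) n (A : 'M[R]_(10, n)) (v : 'cV[R]_n) z :
  peval (A *m v) z = \sum_(i < n) v i 0 * peval (col i A) z.
Proof.
rewrite /peval; under eq_bigr do rewrite mxE big_distrl /= big_distrl /=.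
rewrite exchange_big; apply: eq_bigr => i _; rewrite big_distrr; apply: eq_bigr => g _.
by rewrite !mxE /=; ring.
Qed.

Definition w6 : 'I_6 -> 'I_10 := widen_ord (isT : (6 <= 10)%N).

Lemma M2E (R : nzRingType) (beta : nat -> nat -> R) : M2 beta = mxsub w6 w6 (M3 beta).
Proof. by apply/matrixP => i j; rewrite !mxE. Qed.

Section PointsOfVariety.
Variable R : realFieldType.
Variable beta : nat -> nat -> R.
Variable s : seq (R * R).
Hypothesis size_s : size s = 7%N.
Hypothesis V_s : forall w, variety beta w <-> w \in s.
Hypothesis WC : weakly_consistent beta.
Hypothesis M2pd : pd_mx (M2 beta).

Definition node (k : 'I_7) : R * R := nth 0 s k.

Lemma node_in k : node k \in s.
Proof. by rewrite mem_nth // size_s. Qed.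

Lemma node_onto w : w \in s -> exists k, w = node k.
Proof.
move=> ws; have hi : (index w s < 7)%N by rewrite -size_s index_mem.
by exists (Ordinal hi); rewrite /node nth_index.
Qed.

Lemma ker_vanish f w : w \in s -> M3 beta *m f = 0 -> peval f w = 0.
Proof. by move=> /V_s; apply. Qed.

Lemma in_s_of_vanish w : (forall f, M3 beta *m f = 0 -> peval f w = 0) -> w \in s.
Proof. by move=> H; apply/V_s. Qed.

Lemma ker_eval (f : 'cV[R]_10) : eval_mx node *m f = 0 -> M3 beta *m f = 0.
Proof.
move=> Ef; apply: WC => w /V_s /node_onto[k ->].
by rewrite -eval_mxE Ef mxE.
Qed.

Lemma low_ker_eq0 f : lead_form f 0 0 0 0 -> M3 beta *m f = 0 -> f = 0.
Proof.
case=> f3 f2 f1 f0; apply: (pd_block_ker (le := isT : (6 <= 10)%N)); first by rewrite -M2E.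
case=> [[|[|[|[|[|[|[|[|[|[|//]]]]]]]]]] p] //= _;
  [rewrite -f3|rewrite -f2|rewrite -f1|rewrite -f0]; congr (f _ _); exact: val_inj.
Qed.

Lemma low_eval_rank : \rank (colsub w6 (eval_mx node)) = 6%N.
Proof.
rewrite -mxrank_tr; apply/eqP; apply: inj_row_free => v.
move=> /(congr1 trmx); rewrite trmx_mul trmxK trmx0 => Ev.
set f := colsub w6 1%:M *m v^T.
have f0 : f = 0.
  apply: low_ker_eq0; first by split; rewrite colsub1_mul_notin // widen_ord_codom.
  by apply: ker_eval; rewrite /f mulmxA -colsubEmul.
apply: trmx_inj; apply/matrixP => k j.
rewrite ord1 -(colsub1_mul_at (@widen_ord_inj 6 10 isT)) -/f f0.
by rewrite !mxE.
Qed.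

(* When 1 - AB = 0 = B + AC, the leading forms of P1, P2, P3 all vanish at (1, -B). *)
Section Degenerate.
Variables (P1 P2 P3 : 'cV[R]_10) (A B C : R).
Hypotheses (lead1 : lead_form P1 1 A 0 0) (lead2 : lead_form P2 0 B 1 0)
  (lead3 : lead_form P3 0 C 0 1).
Hypothesis ker_span : forall f, M3 beta *m f = 0 ->
  f = f mX3 0 *: P1 + f mXY2 0 *: P2 + f mY3 0 *: P3.
Hypotheses (dg1 : 1 - A * B = 0) (dg2 : B + A * C = 0).

Lemma lead_at_ker f : M3 beta *m f = 0 -> lead_at (- B) f = 0.
Proof.
move=> /ker_span ->; rewrite lead_atE !mxE.
case: lead1 => -> -> -> ->; case: lead2 => -> -> -> ->; case: lead3 => -> -> -> ->.
transitivity (f mX3 0 * (1 - A * B) - f mY3 0 * B * (C * (1 - A * B) + B * (B + A * C))).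
  by ring.
by rewrite dg1 dg2; ring.
Qed.

Lemma lead_at_nodes :
  exists l : 'rV[R]_7, forall f, lead_at (- B) f = \sum_k l 0 k * peval f (node k).
Proof.
have [l el] : exists l : 'rV[R]_7, lead_row (- B) = l *m eval_mx node.
  apply: row_span_of_ker => f /ker_eval /lead_at_ker; rewrite /lead_at => h.
  by apply/matrixP => i j; rewrite !ord1 h mxE.
exists l => f; rewrite /lead_at el -mulmxA mxE.
by apply: eq_bigr => k _; rewrite eval_mxE.
Qed.

Section Charged.
Variable l : 'rV[R]_7.
Hypothesis hl : forall f, lead_at (- B) f = \sum_k l 0 k * peval f (node k).

Lemma charged_vanish f :
  (forall k, l 0 k != 0 -> peval f (node k) = 0) -> lead_at (- B) f = 0.
Proof.
move=> H; rewrite hl big1 // => k _.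
by have [->|/H ->] := eqVneq (l 0 k) 0; rewrite ?mul0r ?mulr0.
Qed.

Lemma charged_neq0 : l != 0.
Proof.
apply/eqP => l0; have := hl (delta_mx mX3 0); rewrite lead_at_delta /= l0 big1.
  by move/eqP; rewrite oner_eq0.
by move=> k _; rewrite mxE mul0r.
Qed.

Lemma charged_quadratic a0 a1 a2 :
  (forall k, l 0 k != 0 -> a0 + a1 * (node k).1 + a2 * (node k).1 ^+ 2 = 0) ->
  [/\ a0 = 0, a1 = 0 & a2 = 0].
Proof.
move=> q0.
have top c0 c1 c2 c3 : (forall k, l 0 k != 0 ->
    c0 + c1 * (node k).1 + c2 * (node k).1 ^+ 2 + c3 * (node k).1 ^+ 3 = 0) -> c3 = 0.
  move=> H; rewrite -(lead_at_xcubic (- B) c0 c1 c2 c3).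
  by apply: charged_vanish => k lk; rewrite peval_xcubic H.
have e2 : a2 = 0.
  apply: (top 0 a0 a1) => k lk.
  by rewrite -[RHS](mulr0 (node k).1) -[in RHS](q0 k lk); ring.
have e1 : a1 = 0.
  apply: (top 0 0 a0) => k lk.
  by rewrite -[RHS](mulr0 ((node k).1 ^+ 2)) -[in RHS](q0 k lk) e2; ring.
have e0 : a0 = 0.
  apply: (top 0 0 0) => k lk.
  by rewrite -[RHS](mulr0 ((node k).1 ^+ 3)) -[in RHS](q0 k lk) e2 e1; ring.
by split.
Qed.

Lemma charged_on_line :
  exists k0, forall k, l 0 k != 0 -> (node k).2 = k0 + (- B) * (node k).1.
Proof.
set E2 := colsub w6 (eval_mx node).
have rK : \rank (kermx E2) = 1%N by rewrite mxrank_ker low_eval_rank.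
have low_row (r : 'rV[R]_7) : (forall g, \sum_k r 0 k * peval (delta_mx (w6 g) 0) (node k) = 0) ->
    (r <= kermx E2)%MS.
  move=> H; apply/sub_kermxP/matrixP => i g; rewrite ord1 !mxE -[RHS](H g).
  by apply: eq_bigr => k _; rewrite !mxE peval_delta.
have lK : (l <= kermx E2)%MS.
  apply: low_row => g; rewrite -hl lead_at_delta.
  by case: g => [[|[|[|[|[|[|//]]]]]] ?].
pose mu : 'rV[R]_7 := \row_k (l 0 k * ((node k).2 + B * (node k).1)).
have muK : (mu <= kermx E2)%MS.
  apply: low_row => g.
  have : ((mono (w6 g)).1 + (mono (w6 g)).2 <= 2)%N by case: g => [[|[|[|[|[|[|//]]]]]] ?].
  move: (mono (w6 g)) (peval_delta (R := R) (w6 g)) => [i j] /= ev hij.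
  have [g1 e1] : exists g1, mono g1 = (i.+1, j) by apply: mono_onto; lia.
  have [g2 e2] : exists g2, mono g2 = (i, j.+1) by apply: mono_onto; lia.
  transitivity (\sum_k l 0 k * peval (B *: delta_mx g1 0 + delta_mx g2 0) (node k)).
    by apply: eq_bigr => k _; rewrite !mxE ev peval_lin !peval_delta e1 e2 /mom_pt /= !exprS; ring.
  rewrite -hl lead_at_lin !lead_at_delta e1 e2 /= addSn addnS.
  by case: ifP => _; rewrite ?exprS; ring.
(* l and mu both annihilate the values at the nodes of the quadratics, a line of functionals. *)
have [k0 ek0] := rank1_proportional rK lK muK charged_neq0.
exists k0 => k lk; move: (congr1 (fun r : 'rV[R]_7 => r 0 k) ek0); rewrite !mxE => e.
have <- : (node k).2 + B * (node k).1 = k0 by apply: (mulfI lk); rewrite e mulrC.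
by ring.
Qed.

Lemma charged_line_vanish k0 :
  (forall k, l 0 k != 0 -> (node k).2 = k0 + (- B) * (node k).1) ->
  forall f u, M3 beta *m f = 0 -> peval f (u, k0 + (- B) * u) = 0.
Proof.
move=> hk0 f u Mf; have [G0 [G1 [G2 hG]]] := peval_line f k0 (- B).
rewrite hG (lead_at_ker Mf).
have [-> -> ->] : [/\ G0 = 0, G1 = 0 & G2 = 0].
  apply: charged_quadratic => k lk; rewrite -(ker_vanish (node_in k) Mf).
  by rewrite [in RHS](surjective_pairing (node k)) (hk0 k lk) hG (lead_at_ker Mf); ring.
by ring.
Qed.

End Charged.

Theorem degenerate_false : False.
Proof.
have [l hl] := lead_at_nodes; have [k0 hk0] := charged_on_line hl.
pose W := [seq (n%:R, k0 + (- B) * n%:R) | n <- iota 0 8] : seq (R * R).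
have uW : uniq W.
  by rewrite map_inj_uniq ?iota_uniq // => n n' /(congr1 fst) /= /eqP; rewrite eqr_nat => /eqP.
have sW : {subset W <= s}.
  move=> w /mapP[n _ ->]; apply: in_s_of_vanish => f Mf.
  exact: charged_line_vanish hk0 _ _ Mf.
by have := uniq_leq_size uW sW; rewrite size_map size_iota size_s.
Qed.

End Degenerate.

End PointsOfVariety.

(** * The flat decomposition *)

Section FlatDecomposition.
Variable R : realFieldType.
Variable beta : nat -> nat -> R.
Variable s : seq (R * R).
Hypothesis size_s : size s = 7%N.
Hypothesis V_s : forall w, variety beta w <-> w \in s.
Hypothesis WC : weakly_consistent beta.
Hypothesis M2pd : pd_mx (M2 beta).
Hypothesis M3psd : psd_mx (M3 beta).
Hypothesis rank7 : \rank (M3 beta) = 7%N.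
Hypothesis B2b : B2_basis beta.

Definition beta_or_node (m : nat -> nat -> R) : Prop :=
  m = beta \/ exists k, m = mom_pt (node s k).

Lemma ker_null_cubic p : M3 beta *m p = 0 -> null_cubic beta_or_node p.
Proof.
move=> Mp m [->|[k ->]] c1 c2 hc.
  have [r er] := mono_onto hc.
  by transitivity ((M3 beta *m p) r 0); [rewrite M3E er riesz_mulXY | rewrite Mp mxE].
by rewrite riesz_pt_mulXY // (ker_vanish V_s (node_in size_s k) Mp) mul0r.
Qed.

Lemma sextics_reducible h : reducible beta_or_node h.
Proof.
have [P1 [P2 [P3 [A [B [C [l1 l2 l3 [K1 K2 K3] span]]]]]]] := M3_kernel B2b.
have nd : (1 - A * B != 0) \/ (B + A * C != 0).
  have [d1|] := eqVneq (1 - A * B) 0; last by left.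
  have [d2|] := eqVneq (B + A * C) 0; last by right.
  by case: (degenerate_false size_s V_s WC M2pd l1 l2 l3 span d1 d2).
apply: (reducible_all (gens := gens3 P1 P2 P3)); last exact: quartic_reps l1 l2 l3 nd.
by move=> p [->|->|->]; exact: ker_null_cubic.
Qed.

Lemma eval_rank : \rank (eval_mx (node s)) = 7%N.
Proof.
have sub : (M3 beta <= eval_mx (node s))%MS.
  apply/row_subP => i; have [l ->] : exists l, row i (M3 beta) = l *m eval_mx (node s).
    by apply: row_span_of_ker => f /(ker_eval size_s V_s WC) Mf; rewrite -row_mul Mf row0.
  exact: submxMl.
by apply/eqP; rewrite eqn_leq rank_leq_row -{1}rank7 mxrankS.
Qed.

Theorem node_weights : exists w : 'I_7 -> R, (forall k, 0 <= w k) /\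
  forall i j, (i + j <= 6)%N -> beta i j = \sum_k w k * mom_pt (node s k) i j.
Proof.
set E := eval_mx (node s); set M := M3 beta.
have [L EL] : exists L, E *m L = 1%:M by apply/row_freeP; rewrite /row_free eval_rank.
have Mflat : M *m (1%:M - L *m E) = 0.
  apply/matrixP => i j; rewrite mulmx_col_entry (ker_eval size_s V_s WC) ?mxE //.
  by rewrite colE mulmxA mulmxBr mulmx1 mulmxA EL mul1mx subrr mul0mx.
(* The columns of L are the Lagrange cubics at the nodes and W is their Gram matrix. *)
have MW := sym_factor M3psd.1 Mflat; set W := L^T *m M *m L in MW.
have Wquad k m : W k m = riesz beta (cubic_mul (col m L) (col k L)).
  rewrite riesz_beta_cubic_mul /W -mulmxA mxE; apply: eq_bigr => g _.
  by rewrite mulmx_col_entry !mxE.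
have Wdiag k m : k != m -> W k m = 0.
  move=> km; have [f hf] := sextics_reducible (cubic_mul (col m L) (col k L)).
  have Mf : M *m f = 0.
    apply: (ker_eval size_s V_s WC); apply/matrixP => n j; rewrite ord1 eval_mxE mxE.
    rewrite -riesz_pt_cubic -hf; last by right; exists n.
    rewrite riesz_pt_cubic_mul -!eval_mxE -!mulmx_col_entry EL !mxE.
    by case: eqP => [->|_]; rewrite ?mul0r // eq_sym (negbTE km) mulr0.
  by rewrite Wquad hf; [rewrite riesz_beta_cubic Mf mxE | left].
have Wpsd k : 0 <= W k k.
  rewrite Wquad riesz_beta_cubic_mul; have := M3psd.2 (col k L).
  by rewrite -mulmxA mxE; under eq_bigr do rewrite mxE.
exists (fun k => W k k); split => // i j hij.
have [a [b [ea eb]]] := mono_split hij.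
have -> : beta i j = M a b by rewrite /M /M3 mxE ea eb.
rewrite /M MW mxE; apply: eq_bigr => m _.
rewrite mxE (bigD1 m) //= big1 ?addr0 => [|n nm]; last by rewrite Wdiag ?mulr0 // eq_sym.
by rewrite !mxE /mom_pt -ea -eb !exprD; ring.
Qed.

End FlatDecomposition.

(** * Measures *)

Section AtomicMeasure.
Local Open Scope classical_set_scope.
Variables (d : measure_display) (T : measurableType d) (R : realType).
Variables (n : nat) (pts : 'I_n -> T) (w : 'I_n -> {nonneg R}).

Definition atomic_measure : {measure set T -> \bar R} :=
  msum (fun i => if insub i is Some k then mscale (w k) \d_(pts k) else mzero) n.

Lemma integral_atomic_ge0 (g : T -> \bar R) :
  measurable_fun setT g -> (forall x, 0 <= g x)%E ->
  (\int[atomic_measure]_x g x = \sum_(k < n) (w k)%:num%:E * g (pts k))%E.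
Proof.
move=> mg g0; rewrite ge0_integral_measure_sum //; apply: eq_bigr => k _.
by rewrite valK ge0_integral_mscale // integral_dirac // diracT mul1e.
Qed.

Lemma integral_atomic (f : T -> R) : measurable_fun setT f ->
  atomic_measure.-integrable setT (fun x => (f x)%:E) /\
  (\int[atomic_measure]_x (f x)%:E = (\sum_(k < n) (w k)%:num * f (pts k))%:E)%E.
Proof.
move=> mf; have mf' : measurable_fun setT (fun x => (f x)%:E) by apply/measurable_EFinP.
split.
  apply/integrableP; split => //.
  rewrite integral_atomic_ge0 //; last exact: measurableT_comp.
  by under eq_bigr do rewrite abse_EFin -EFinM; rewrite sumEFin ltry.
rewrite integralE !integral_atomic_ge0 //; [|exact: measurable_funeneg|exact: measurable_funepos].
under eq_bigr do rewrite funeposE -EFin_max -EFinM.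
under [X in (_ - X)%E]eq_bigr do rewrite funenegE -EFinN -EFin_max -EFinM.
rewrite !sumEFin -EFinB -sumrB; congr EFin; apply: eq_bigr => k _.
have [h|h] := leP 0 (f (pts k)).
  by rewrite max_r ?oppr_le0 //; ring.
by rewrite max_l ?oppr_ge0 ?(ltW h) //; ring.
Qed.

End AtomicMeasure.

Section RepresentingMeasure.
Local Open Scope classical_set_scope.
Variable R : realType.
Variable beta : nat -> nat -> R.
Variable mu : {measure set (R * R)%type -> \bar R}.
Hypothesis mu_beta : forall i j : nat, (i + j <= 6)%N ->
  mu.-integrable setT (fun z : R * R => (z.1 ^+ i * z.2 ^+ j)%:E) /\
  (\int[mu]_z (z.1 ^+ i * z.2 ^+ j)%:E = (beta i j)%:E)%E.

Lemma integral_peval_mul (f g : 'cV[R]_10) :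
  mu.-integrable setT (fun z => (peval f z * peval g z)%:E) /\
  (\int[mu]_z (peval f z * peval g z)%:E = (\sum_(b < 10) g b 0 * (M3 beta *m f) b 0)%:E)%E.
Proof.
pose m a b (z : R * R) := mom_pt z ((mono a).1 + (mono b).1) ((mono a).2 + (mono b).2).
have mdeg a b : ((mono a).1 + (mono b).1 + ((mono a).2 + (mono b).2) <= 6)%N.
  by have := mono_deg a; have := mono_deg b; lia.
have e : (fun z => (peval f z * peval g z)%:E) =
    (fun z => \sum_(b < 10) \sum_(a < 10) ((g b 0 * f a 0)%:E * (m a b z)%:E))%E.
  apply/funext => z; rewrite /peval mulrC mulr_suml -sumEFin; apply: eq_bigr => b _.
  rewrite mulr_sumr -sumEFin; apply: eq_bigr => a _.
  by rewrite -EFinM /m /mom_pt !exprD; congr EFin; ring.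
have iab a b : mu.-integrable setT (fun z => (g b 0 * f a 0)%:E * (m a b z)%:E)%E.
  by apply: integrableZl => //; exact: (mu_beta (mdeg a b)).1.
have ib b : mu.-integrable setT (fun z => \sum_(a < 10) ((g b 0 * f a 0)%:E * (m a b z)%:E))%E.
  by apply: integrable_sum => // a _; exact: iab.
rewrite e; split; first by apply: integrable_sum => // b _; exact: ib.
rewrite integral_sum // -sumEFin; apply: eq_bigr => b _.
rewrite integral_sum // M3E mulr_sumr -sumEFin; apply: eq_bigr => a _.
rewrite integralZl //; last exact: (mu_beta (mdeg a b)).1.
by rewrite (mu_beta (mdeg a b)).2 -EFinM mulrA.
Qed.

Lemma ker_ae (f : 'cV[R]_10) : M3 beta *m f = 0 -> \forall z \ae mu, peval f z = 0.
Proof.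
move=> Mf; have [iff eff] := integral_peval_mul f f.
have E0 : (\int[mu]_z `|(peval f z * peval f z)%:E| = 0)%E.
  transitivity (\int[mu]_z (peval f z * peval f z)%:E)%E.
    by apply: eq_integral => z _; rewrite abse_EFin ger0_norm // -expr2 sqr_ge0.
  by rewrite eff Mf big1 // => k _; rewrite mxE mulr0.
have := (ae_eq_integral_abs mu measurableT (measurable_int mu iff)).1 E0.
by apply: filterS => z /(_ I) /= /eqP; rewrite eqe mulf_eq0 orbb => /eqP.
Qed.

Lemma ae_variety : \forall z \ae mu, variety beta z.
Proof.
set K := kermx (M3 beta)^T.
have KM i : M3 beta *m (row i K)^T = 0.
  by rewrite -[M3 beta]trmxK -trmx_mul -row_mul mulmx_ker row0 trmx0.
apply: filterS (filter_forall _ (fun i => ker_ae (KM i))) => z Kz a Ma.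
have /submxP[c ec] : (a^T <= K)%MS.
  by apply/sub_kermxP; rewrite -trmx_mul [M3 beta *m a]Ma trmx0.
rewrite -[a]trmxK ec trmx_mul peval_mulmx big1 // => i _.
by rewrite -tr_row Kz mulr0.
Qed.

Theorem rep_measure_weakly_consistent : weakly_consistent beta.
Proof.
move=> a Ha; have a0 : \forall z \ae mu, peval a z = 0 by apply: filterS ae_variety.
apply/matrixP => g j; rewrite ord1 [RHS]mxE.
have [ig eg] := integral_peval_mul a (delta_mx g 0).
have mi := measurable_int mu ig.
have : (\int[mu]_z (peval a z * peval (delta_mx g 0) z)%:E = 0)%E.
  rewrite (ae_eq_integral (cst 0)) //; first exact: integral0.
  by apply: filterS a0 => z az _; rewrite az mul0r.
rewrite eg => /eqP; rewrite eqe => /eqP.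
rewrite (bigD1 g) //= big1 ?addr0 => [|k kg]; last by rewrite mxE (negbTE kg) mul0r.
by rewrite mxE !eqxx mul1r.
Qed.

End RepresentingMeasure.

Theorem theorem4p3 (R : realType) (beta : nat -> nat -> R) :
  psd_mx (M3 beta) ->
  pd_mx (M2 beta) ->
  \rank (M3 beta) = 7%N ->
  variety_card (variety beta) 7%N ->
  B2_basis beta ->
  (has_rep_measure beta <-> weakly_consistent beta).
Proof.
move=> M3psd M2pd rank7 [s [_ size_s V_s]] B2b; split.
  by case=> mu mu_beta; exact: rep_measure_weakly_consistent mu_beta.
move=> WC; have [w [w0 hw]] := node_weights size_s V_s WC M2pd M3psd rank7 B2b.
exists (atomic_measure (node s) (fun k => NngNum (w0 k))) => i j hij.
have mf : measurable_fun setT (fun z : R * R => z.1 ^+ i * z.2 ^+ j).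
  by apply: measurable_funM; apply: measurable_funX;
    [exact: measurable_fst | exact: measurable_snd].
have [I1 I2] := integral_atomic (node s) (fun k => NngNum (w0 k)) mf.
by split => //; rewrite I2 (hw i j hij).
Qed.
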